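(* Let $m\ge6$ be even, $t=m/2$, and $s$ an integer with $2\le s\le 2^{t-1}$. Let $E_1,\dots,E_\alpha$ be a partial spread in $\mathbb{F}_2^m$ and $A,B\subseteq\{1,\dots,\alpha\}$ with $|A|=|B|=s$ and $|A\cap B|=1$. Let $f=\sum_{i\in A}f_i$, $g=\sum_{i\in B}f_i$, and $F=\{f,g,f+g\}$. Then for all nonzero $\mathbf{h},\mathbf{l}\in\mathbb{F}_2^m$ with $\mathbf{h}\neq\mathbf{l}$ and all $f_1,f_2\in F$ with $f_1\neq f_2$, \[\widehat{f_1}(\mathbf{h}+\mathbf{l})+\widehat{f_2}(\mathbf{h})-\widehat{f_1+f_2}(\mathbf{l})\neq 2^m\quad\text{and}\quad \widehat{f_1}(\mathbf{h}+\mathbf{l})+\widehat{f_2}(\mathbf{l})-\widehat{f_1+f_2}(\mathbf{h})\neq 2^m.\]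
   Context: A partial spread in $\mathbb{F}_2^m$ ($m=2t$) is a set of subspaces $E_1,\dots,E_\alpha$ of $\mathbb{F}_2^m$, each of dimension $t$, with $E_i\cap E_j=\{\mathbf{0}\}$ for $i\ne j$. $f_i:\mathbb{F}_2^m\to\mathbb{F}_2$ is the indicator function of $E_i\setminus\{\mathbf{0}\}$; sums of Boolean functions are mod 2. For a Boolean function $h$, $\widehat{h}(\mathbf{w})=\sum_{\mathbf{x}\in\mathbb{F}_2^m}(-1)^{h(\mathbf{x})+\mathbf{w}\cdot\mathbf{x}}$ with the standard inner product. *)

From HB Require Import structures.
From mathcomp Require Import all_boot all_order all_algebra all_field.
Set Implicit Arguments. Unset Strict Implicit. Unset Printing Implicit Defensive.
Import GRing.Theory.
Local Open Scope ring_scope.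

Notation vec m := 'rV['F_2]_m.

Definition dotF2 (m : nat) (w x : vec m) : 'F_2 := \sum_(i < m) w 0 i * x 0 i.

(* Boolean functions F_2^m -> F_2, values in bool (true = 1) *)
Definition boolfun (m : nat) := vec m -> bool.

Definition walsh (m : nat) (h : boolfun m) (w : vec m) : int :=
  \sum_(x : vec m) (-1) ^+ (h x (+) (dotF2 w x != 0)).

Definition bfadd (m : nat) (f g : boolfun m) : boolfun m := fun x => f x (+) g x.

Definition partial_spread (m t alpha : nat) (E : 'I_alpha -> {vspace vec m}) :=
  (forall i, \dim (E i) = t) /\
  (forall i j, i != j -> (E i :&: E j)%VS = 0%VS).

Definition spread_ind (m : nat) (E : {vspace vec m}) : boolfun m :=
  fun x => (x \in E) && (x != 0).

Definition spread_sum (m alpha : nat) (E : 'I_alpha -> {vspace vec m})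
  (A : {set 'I_alpha}) : boolfun m :=
  fun x => \big[addb/false]_(i in A) spread_ind (E i) x.

From mathcomp Require Import all_boot all_order all_algebra all_field zify ring.
Set Implicit Arguments. Unset Strict Implicit. Unset Printing Implicit Defensive.
Import GRing.Theory.
Local Open Scope ring_scope.

(* For w <> 0 the character x |-> (-1)^(w.x) sums to 0 over F_2^m, and over a
   subspace V it sums to 2^dim V if w is orthogonal to V and to 0 otherwise.
   As the sets E_i \ {0} are disjoint, the Walsh value of f_C = sum_(i in C) f_i
   at w <> 0 is 2|C| - 2^(t+1) N, where N <= 1 counts the E_i (i in C)
   orthogonal to w: two distinct blocks of the spread span F_2^m.
   The functions of F are f_A, f_B and f_(A Δ B); for two distinct ones,
   f_C1 + f_C2 = f_(C1 Δ C2) and |C1 ∩ C2| <= s - 1, which bounds the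
   left-hand sides by 4 (s - 1) + 2^(t+1) < 2^(2t). *)

Lemma F2_cases (a : 'F_2) : a = 0 \/ a = 1.
Proof. by case: a => [[|[|//]] ?]; [left|right]; apply/val_inj. Qed.

Lemma F2_addr_neq0 (a b : 'F_2) : (a + b != 0) = (a != 0) (+) (b != 0).
Proof.
have F2_11 : (1 + 1 : 'F_2) = 0 by apply/val_inj.
by case: (F2_cases a) => ->; case: (F2_cases b) => ->;
  rewrite ?addr0 ?add0r ?F2_11 ?eqxx ?oner_eq0.
Qed.

Section Characters.
Variable m : nat.
Implicit Types (w x y : vec m) (V : {vspace vec m}).

Definition chi w x : int := (-1) ^+ (dotF2 w x != 0).

Definition orthF2 w V : bool := [forall x, (x \in V) ==> (dotF2 w x == 0)].

Lemma dotF2D w x y : dotF2 w (x + y) = dotF2 w x + dotF2 w y.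
Proof. by rewrite /dotF2 -big_split; apply: eq_bigr => i _; rewrite mxE mulrDr. Qed.

Lemma dotF2_delta w k : dotF2 w (delta_mx 0 k) = w 0 k.
Proof.
rewrite /dotF2 (bigD1 k) //= mxE !eqxx mulr1 big1 ?addr0 // => i /negbTE ik.
by rewrite mxE ik andbF mulr0.
Qed.

Lemma orthF2_fullv w : orthF2 w fullv -> w = 0.
Proof.
move/forallP=> wV; apply/rowP => k; rewrite mxE -dotF2_delta.
by apply/eqP; move: (wV (delta_mx 0 k)); rewrite memvf.
Qed.

Lemma oppF2 w : - w = w.
Proof.
by apply/rowP => k; rewrite mxE; case: (F2_cases (w 0 k)) => ->; apply/val_inj.
Qed.

Lemma chiD w x y : chi w (x + y) = chi w x * chi w y.
Proof. by rewrite /chi dotF2D F2_addr_neq0 signr_addb. Qed.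

Lemma chi0 w : chi w 0 = 1.
Proof.
by rewrite /chi /dotF2 big1 ?eqxx // => i _; rewrite mxE mulr0.
Qed.

Lemma sum_chi_vspace w V :
  \sum_(x in V) chi w x = if orthF2 w V then (2 ^ \dim V)%:R else 0.
Proof.
case: ifPn => [/forallP wV | /forallPn [y]].
  rewrite (eq_bigr (fun=> 1)) => [|x xV]; last first.
    by rewrite /chi (eqP (implyP (wV x) xV)).
  by rewrite sumr_const card_vspace card_Fp.
rewrite negb_imply => /andP [yV wy].
(* translating by [y] flips the sign of every term *)
have SN : \sum_(x in V) chi w x = - \sum_(x in V) chi w x.
  rewrite {1}(reindex_inj (addIr y)) -sumrN; apply: eq_big => [x|x _].
    by rewrite /= rpredDr.
  by rewrite chiD [chi w y]/chi wy /= expr1 mulrN1.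
lia.
Qed.

Lemma sum_chi_neq0 w : w != 0 -> \sum_x chi w x = 0.
Proof.
move=> w0; rewrite -(eq_bigl _ _ (@memvf _ _)) sum_chi_vspace.
by case: ifP => // /orthF2_fullv w0'; rewrite w0' eqxx in w0.
Qed.

Lemma walshE (f : boolfun m) w :
  walsh f w = \sum_x chi w x - 2 * \sum_(x | f x) chi w x.
Proof.
rewrite /walsh [X in _ - 2 * X]big_mkcond /= mulr_sumr -sumrB.
apply: eq_bigr => x _.
by rewrite signr_addb -/(chi w x); case: (f x); rewrite /= ?expr0 ?expr1; ring.
Qed.

Lemma eq_walsh (f g : boolfun m) w : f =1 g -> walsh f w = walsh g w.
Proof. by move=> fg; apply: eq_bigr => x _; rewrite fg. Qed.

End Characters.

Section SymmetricDifference.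
Variable I : finType.
Implicit Types A B : {set I}.

Lemma big_addb_symdiff (F : I -> bool) A B :
  \big[addb/false]_(i in A) F i (+) \big[addb/false]_(i in B) F i =
  \big[addb/false]_(i in (A :\: B) :|: (B :\: A)) F i.
Proof.
rewrite (big_setID B) [X in _ (+) X](big_setID A) [B :&: A]setIC /=.
rewrite [RHS](big_setID A) /=.
have -> : ((A :\: B) :|: (B :\: A)) :&: A = A :\: B.
  by apply/setP => i; rewrite !inE; case: (i \in A); case: (i \in B).
have -> : ((A :\: B) :|: (B :\: A)) :\: A = B :\: A.
  by apply/setP => i; rewrite !inE; case: (i \in A); case: (i \in B).
by case: (\big[addb/false]_(i in A :&: B) F i); rewrite ?addbN ?addNb ?negbK.
Qed.

Lemma card_symdiff A B :
  (#|(A :\: B) :|: (B :\: A)| + 2 * #|A :&: B| = #|A| + #|B|)%N.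
Proof.
rewrite cardsU; have -> : (A :\: B) :&: (B :\: A) = set0.
  by apply/setP => i; rewrite !inE; case: (i \in A); case: (i \in B).
rewrite !cardsD [B :&: A]setIC cards0.
have := subset_leq_card (subsetIl A B); have := subset_leq_card (subsetIr A B); lia.
Qed.

End SymmetricDifference.

Lemma spread_sum_symdiff m alpha (E : 'I_alpha -> {vspace vec m}) A B :
  bfadd (spread_sum E A) (spread_sum E B) =1 spread_sum E ((A :\: B) :|: (B :\: A)).
Proof. by move=> x; apply: big_addb_symdiff. Qed.

Section PartialSpread.
Variables (m t alpha : nat) (E : 'I_alpha -> {vspace vec m}).
Hypothesis spreadE : partial_spread t E.
Implicit Types (w x : vec m) (C : {set 'I_alpha}).

Lemma spread_mem_uniq i j x : x \in E i -> x \in E j -> x != 0 -> i = j.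
Proof.
move=> xi xj; apply: contraTeq => ij.
by rewrite negbK -memv0 -(spreadE.2 i j ij) memv_cap xi xj.
Qed.

Lemma spread_addv_fullv i j : m = (2 * t)%N -> i != j -> (E i + E j)%VS = fullv.
Proof.
move=> m2t ij; apply/eqP; rewrite eqEdim subvf dimvf /dim /= mul1n.
have := dimv_sum_cap (E i) (E j); rewrite (spreadE.2 i j ij) dimv0 !spreadE.1; lia.
Qed.

Lemma orthF2_spread_uniq i j w : m = (2 * t)%N -> w != 0 ->
  orthF2 w (E i) -> orthF2 w (E j) -> i = j.
Proof.
move=> m2t w0 /forallP wi /forallP wj; apply: contraTeq w0 => ij.
rewrite negbK; apply/eqP/orthF2_fullv/forallP => x; apply/implyP.
rewrite -(spread_addv_fullv m2t ij) => /memv_addP [y yi [z zj ->]].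
by rewrite dotF2D (eqP (implyP (wi y) yi)) (eqP (implyP (wj z) zj)) addr0.
Qed.

Definition spread_count C x : nat := \sum_(i in C) ((x \in E i) && (x != 0%R)).

Lemma spread_sumE C x : spread_sum E C x = odd (spread_count C x).
Proof.
rewrite /spread_sum /spread_count (big_morph odd oddD (erefl : odd 0 = false)).
by apply: eq_bigr => i _; rewrite oddb.
Qed.

Lemma spread_count_le1 C x : (spread_count C x <= 1)%N.
Proof.
rewrite /spread_count.
case: (pickP (fun i => (i \in C) && ((x \in E i) && (x != 0)))) => [i | none].
  case/and3P => iC xi x0; rewrite (bigD1 i) //= xi x0 big1 // => j /andP [_ ji].
  have /negbTE -> // : x \notin E j.
  by apply: contra ji => xj; rewrite (spread_mem_uniq xj xi x0).
by rewrite big1 // => i iC; move: (none i); rewrite iC => /= ->.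
Qed.

Lemma spread_sum_count C x : spread_sum E C x = spread_count C x :> nat.
Proof. by rewrite spread_sumE; case: (spread_count C x) (spread_count_le1 C x) => [|[]]. Qed.

Lemma sum_chi_spread_sum C w :
  \sum_(x | spread_sum E C x) chi w x = \sum_(i in C) (\sum_(x in E i) chi w x - 1).
Proof.
have sum_nonzero i : \sum_(x in E i) chi w x - 1 =
    \sum_x ((x \in E i) && (x != 0))%:R * chi w x.
  rewrite (bigD1 0) ?mem0v //= chi0 [1 + _]addrC addrK big_mkcond /=.
  by apply: eq_bigr => x _; rewrite mulrC mulr_natr mulrb.
rewrite (eq_bigr _ (fun i _ => sum_nonzero i)) exchange_big big_mkcond /=.
apply: eq_bigr => x _; rewrite -mulr_suml -natr_sum -/(spread_count C x).
by rewrite -spread_sum_count; case: (spread_sum E C x); rewrite ?mul1r ?mul0r.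
Qed.

Definition orth_blocks C w : {set 'I_alpha} := [set i in C | orthF2 w (E i)].

Lemma card_orth_blocks_le1 C w : m = (2 * t)%N -> w != 0 -> (#|orth_blocks C w| <= 1)%N.
Proof.
move=> m2t w0; apply/card_le1_eqP => i j.
rewrite !inE => /andP [_ wi] /andP [_ wj]; exact: orthF2_spread_uniq m2t w0 wj wi.
Qed.

Lemma walsh_spread_sum C w : w != 0 ->
  walsh (spread_sum E C) w = (2 * #|C|)%:Z - (2 ^ t.+1 * #|orth_blocks C w|)%:Z.
Proof.
move=> w0; rewrite walshE sum_chi_neq0 // sum_chi_spread_sum sumrB sumr_const.
rewrite (eq_bigr _ (fun i _ => sum_chi_vspace w (E i))) -big_mkcondr /=.
rewrite (eq_bigr (fun=> (2 ^ t)%:R)) => [|i _]; last by rewrite spreadE.1.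
rewrite (eq_bigl (fun i => i \in orth_blocks C w)) => [|i]; last by rewrite inE.
rewrite sumr_const -[_ *+ #|_|]mulr_natr -natrM !natz expnS !PoszM; ring.
Qed.

Lemma walsh_triple_neq (f1 f2 : boolfun m) C1 C2 (h l : vec m) :
  m = (2 * t)%N -> (2 <= t)%N -> (#|C1 :&: C2| < 2 ^ (t - 1))%N ->
  f1 =1 spread_sum E C1 -> f2 =1 spread_sum E C2 ->
  h != 0 -> l != 0 -> h + l != 0 ->
  walsh f1 (h + l) + walsh f2 h - walsh (bfadd f1 f2) l != 2%:Z ^+ m.
Proof.
move=> m2t t2 small f1E f2E h0 l0 hl0.
have f12E : bfadd f1 f2 =1 spread_sum E ((C1 :\: C2) :|: (C2 :\: C1)).
  by move=> x; rewrite -spread_sum_symdiff /bfadd f1E f2E.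
rewrite (eq_walsh _ f1E) (eq_walsh _ f2E) (eq_walsh _ f12E) !walsh_spread_sum //.
(* the value is 4 |C1 :&: C2| + 2^(t+1) (N3 - N1 - N2) with each N <= 1 *)
have := card_orth_blocks_le1 C1 m2t hl0; have := card_orth_blocks_le1 C2 m2t h0.
have := card_orth_blocks_le1 ((C1 :\: C2) :|: (C2 :\: C1)) m2t l0.
have := card_symdiff C1 C2; have two_pow_m : 2%:Z ^+ m = (2 ^ t * 2 ^ t)%N.
  by rewrite -expnD addnn -mul2n -m2t -[RHS]natz natrX.
have two_pow_t : (2 ^ t = 2 * 2 ^ (t - 1))%N by rewrite -expnS; congr (2 ^ _)%N; lia.
have four_le : (4 <= 2 ^ t)%N by rewrite -[4%N]/(2 ^ 2)%N leq_exp2l.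
rewrite two_pow_m !expnS; move: small; set P := (2 ^ t)%N; set Q := (2 ^ (t - 1))%N.
nia.
Qed.

Lemma walsh_pair_neq (f1 f2 : boolfun m) C1 C2 (h l : vec m) :
  m = (2 * t)%N -> (2 <= t)%N -> (#|C1 :&: C2| < 2 ^ (t - 1))%N ->
  f1 =1 spread_sum E C1 -> f2 =1 spread_sum E C2 ->
  h != 0 -> l != 0 -> h != l ->
  walsh f1 (h + l) + walsh f2 h - walsh (bfadd f1 f2) l != 2%:Z ^+ m /\
  walsh f1 (h + l) + walsh f2 l - walsh (bfadd f1 f2) h != 2%:Z ^+ m.
Proof.
move=> m2t t2 small f1E f2E h0 l0 hl.
have hl0 : h + l != 0 by rewrite addr_eq0 oppF2.
split; first exact: walsh_triple_neq m2t t2 small f1E f2E h0 l0 hl0.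
by rewrite [h + l]addrC; apply: walsh_triple_neq m2t t2 small f1E f2E l0 h0 _; rewrite addrC.
Qed.

End PartialSpread.

Theorem lemma7 (m t s alpha : nat) (E : 'I_alpha -> {vspace vec m})
  (A B : {set 'I_alpha}) :
  (6 <= m)%N -> m = (2 * t)%N ->
  (2 <= s)%N -> (s <= 2 ^ (t - 1))%N ->
  partial_spread t E ->
  #|A| = s -> #|B| = s -> #|A :&: B| = 1%N ->
  let f := spread_sum E A in
  let g := spread_sum E B in
  forall (h l : vec m), h != 0 -> l != 0 -> h != l ->
  forall f1 f2 : boolfun m,
    (f1 = f \/ f1 = g \/ f1 = bfadd f g) ->
    (f2 = f \/ f2 = g \/ f2 = bfadd f g) ->
    f1 <> f2 ->
    walsh f1 (h + l) + walsh f2 h - walsh (bfadd f1 f2) l != 2%:Z ^+ m /\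
    walsh f1 (h + l) + walsh f2 l - walsh (bfadd f1 f2) h != 2%:Z ^+ m.
Proof.
move=> m6 m2t s2 s_le spreadE cardA cardB cardAB f g h l h0 l0 hl f1 f2 f1F f2F f12.
have t2 : (2 <= t)%N by lia.
have pair C1 C2 (phi1 phi2 : boolfun m) : (#|C1 :&: C2| < s)%N ->
    phi1 =1 spread_sum E C1 -> phi2 =1 spread_sum E C2 ->
    walsh phi1 (h + l) + walsh phi2 h - walsh (bfadd phi1 phi2) l != 2%:Z ^+ m /\
    walsh phi1 (h + l) + walsh phi2 l - walsh (bfadd phi1 phi2) h != 2%:Z ^+ m.
  move=> small phi1E phi2E; have small' : (#|C1 :&: C2| < 2 ^ (t - 1))%N by lia.
  exact (walsh_pair_neq spreadE m2t t2 small' phi1E phi2E h0 l0 hl).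
set D := (A :\: B) :|: (B :\: A).
have fgE : bfadd f g =1 spread_sum E D := spread_sum_symdiff E A B.
have cardAD : #|A :&: D| = (s - 1)%N.
  rewrite -cardA -cardAB -cardsD; apply: eq_card => i.
  by rewrite /D !inE; case: (i \in A); case: (i \in B).
have cardBD : #|B :&: D| = (s - 1)%N.
  rewrite -cardB -cardAB [A :&: B]setIC -cardsD; apply: eq_card => i.
  by rewrite /D !inE; case: (i \in A); case: (i \in B).
case: f1F f2F f12 => [->|[->|->]] [->|[->|->]] // _.
- by apply: (pair A B) => //; rewrite cardAB.
- by apply: (pair A D) => //; rewrite cardAD; lia.
- by apply: (pair B A) => //; rewrite setIC cardAB.
- by apply: (pair B D) => //; rewrite cardBD; lia.
- by apply: (pair D A) => //; rewrite setIC cardAD; lia.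
- by apply: (pair D B) => //; rewrite setIC cardBD; lia.
Qed.
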